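(* Let $m$, $\alpha$, $\bar R>1/\sqrt2$, $\Omega$ be as in the context, let $E\in C^{0,\alpha}_\ast(\Omega)$ and let $v\in C^{2,\alpha}_\ast(\Omega)$ be the solution of $\Delta v-\xi\cdot\nabla v+v=E$ in $\Omega$, $v|_{\partial\Omega}=0$. Then for all $\xi\in\Omega$, $$|v(\xi)|\le k|\xi|,\qquad k=\frac{\sup_{\eta\in\Omega}|E(\eta)|\,|\eta|}{2\bar R^2-1}.$$
   Context: $\Omega=\mathbf R^2\setminus B_{\bar R}$ with $B_{\bar R}$ the open disk of radius $\bar R$ at the origin; $m\ge1$ integer, $\alpha\in(0,1)$. For $\xi\in\Omega$, $B(\xi)$ is the unit ball about $\xi$, $[g]_{\alpha,B}$ the Hölder seminorm on $B$. For $r=0,2$, $\|v:C^{r,\alpha}_\ast(\Omega)\|=\max\big(\max_{0\le j\le r}\sup_\Omega|D^jv(\xi)||\xi|^{-r+1+j},\ \sup_\Omega[D^rv]_{\alpha,B(\xi)\cap\Omega}|\xi|^{1+\alpha}\big)$, and $C^{r,\alpha}_\ast(\Omega)$ is the space of $C^{r,\alpha}_{loc}$ functions with finite norm satisfying $v(x,-y)=-v(x,y)$ and $v(\rho_k\xi)=v(\xi)$ for all $k\in\mathbf Z$, $\rho_k$ being the reflection across the line through the origin at angle $\frac{\pi}{2m}+\frac{k\pi}{m}$ with the $x$-axis. *)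

From Stdlib Require Import Reals Lra.
Open Scope R_scope.

Definition nrm (x y : R) : R := sqrt (x * x + y * y).
Definition dist2 (x1 y1 x2 y2 : R) : R := nrm (x1 - x2) (y1 - y2).

Definition inOmega (Rb x y : R) : Prop := Rb * Rb <= x * x + y * y.
Definition inInt (Rb x y : R) : Prop := Rb * Rb < x * x + y * y.
Definition onBdry (Rb x y : R) : Prop := x * x + y * y = Rb * Rb.

Definition cont_on (f : R -> R -> R) (U : R -> R -> Prop) : Prop :=
  forall x y, U x y -> forall eps, 0 < eps -> exists delta, 0 < delta /\
    forall x' y', U x' y' -> dist2 x' y' x y < delta ->
      Rabs (f x' y' - f x y) < eps.

Definition is_dx (f g : R -> R -> R) (U : R -> R -> Prop) : Prop :=
  forall x y, U x y -> derivable_pt_lim (fun t => f t y) x (g x y).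
Definition is_dy (f g : R -> R -> R) (U : R -> R -> Prop) : Prop :=
  forall x y, U x y -> derivable_pt_lim (fun t => f x t) y (g x y).

Definition wbounded (Rb w : R) (P : R -> R -> Prop) (g : R -> R -> R) : Prop :=
  exists C, forall x y, P x y -> Rabs (g x y) * Rpower (nrm x y) w <= C.

Definition wholder (Rb alpha : R) (P : R -> R -> Prop) (g : R -> R -> R) : Prop :=
  exists C, forall x y, inOmega Rb x y ->
    forall a1 a2 b1 b2, P a1 a2 -> P b1 b2 ->
      dist2 a1 a2 x y < 1 -> dist2 b1 b2 x y < 1 ->
      Rabs (g a1 a2 - g b1 b2) * Rpower (nrm x y) (1 + alpha)
        <= C * Rpower (dist2 a1 a2 b1 b2) alpha.

(* reflection rho_k across the line through 0 at angle pi/(2m) + k pi/m *)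
Definition rho_ang (m : nat) (k : Z) : R := (1 + 2 * IZR k) * PI / INR m.
Definition rho_x (m : nat) (k : Z) (x y : R) : R :=
  cos (rho_ang m k) * x + sin (rho_ang m k) * y.
Definition rho_y (m : nat) (k : Z) (x y : R) : R :=
  sin (rho_ang m k) * x - cos (rho_ang m k) * y.

Definition symm (Rb : R) (m : nat) (f : R -> R -> R) : Prop :=
  (forall x y, inOmega Rb x y -> f x (- y) = - f x y) /\
  (forall (k : Z) x y, inOmega Rb x y -> f (rho_x m k x y) (rho_y m k x y) = f x y).

Definition C0a_star (Rb alpha : R) (m : nat) (E : R -> R -> R) : Prop :=
  cont_on E (inOmega Rb) /\
  wbounded Rb 1 (inOmega Rb) E /\
  wholder Rb alpha (inOmega Rb) E /\
  symm Rb m E.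

Definition C2a_star (Rb alpha : R) (m : nat)
    (v vx vy vxx vxy vyx vyy : R -> R -> R) : Prop :=
  let I := inInt Rb in
  is_dx v vx I /\ is_dy v vy I /\
  is_dx vx vxx I /\ is_dy vx vxy I /\ is_dx vy vyx I /\ is_dy vy vyy I /\
  cont_on v (inOmega Rb) /\
  cont_on vx I /\ cont_on vy I /\
  cont_on vxx I /\ cont_on vxy I /\ cont_on vyx I /\ cont_on vyy I /\
  wbounded Rb (-1) (inOmega Rb) v /\
  wbounded Rb 0 I vx /\ wbounded Rb 0 I vy /\
  wbounded Rb 1 I vxx /\ wbounded Rb 1 I vxy /\
  wbounded Rb 1 I vyx /\ wbounded Rb 1 I vyy /\
  wholder Rb alpha I vxx /\ wholder Rb alpha I vxy /\
  wholder Rb alpha I vyx /\ wholder Rb alpha I vyy /\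
  symm Rb m v.

From Stdlib Require Import Reals Lra ClassicalEpsilon.
From Coquelicot Require Import Coquelicot.
Open Scope R_scope.

(* Since v is odd in y it vanishes on the x-axis, so it suffices to bound v and - v on
   the upper half D = {y > 0, |xi| > Rb}, where both vanish on the boundary.
   1. Maximum principle on D ([half_domain_max_principle]).  L has a zeroth-order term of
      the wrong sign, but L y = 0; so one maximizes the positive part of n / y, which is
      continuous on the plane when n < 0 on the boundary of D and vanishes far out.  At a
      maximum point (x0, y0) with value phi > 0, n - phi y has an interior maximum, and the
      one-dimensional second-derivative test in x and in y gives L n (x0, y0) <= 0.
   2. Barriers ([barrier_margin]).  For g = kappa (r - Rb^2 / r) + eps r^2, r = |xi|,
      L g = kappa (1 - 2 Rb^2) / r - kappa Rb^2 / r^3 + eps (4 - r^2); with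
      kappa = K / (2 Rb^2 - 1) + delta and eps = delta (2 Rb^2 - 1) / 8 this is < - K / r.
      Hence L (v - g) > 0 in D, v - g < 0 on the boundary and far out, so v <= g by step 1,
      and delta -> 0 gives v <= K r / (2 Rb^2 - 1) ([half_domain_bound]). *)

Definition near2 (x y : R) (P : R -> R -> Prop) : Prop :=
  exists d, 0 < d /\ forall a b, Rabs (a - x) < d -> Rabs (b - y) < d -> P a b.

Lemma near2_center x y (P : R -> R -> Prop) : near2 x y P -> P x y.
Proof.
  intros [d [Hd HP]]. apply HP; rewrite Rminus_diag, Rabs_R0; lra.
Qed.

Lemma near2_and x y (P Q : R -> R -> Prop) :
  near2 x y P -> near2 x y Q -> near2 x y (fun a b => P a b /\ Q a b).
Proof.
  intros [d1 [Hd1 HP]] [d2 [Hd2 HQ]]. exists (Rmin d1 d2).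
  split; [apply Rmin_pos; lra |].
  intros a b Ha Hb. pose proof (Rmin_l d1 d2). pose proof (Rmin_r d1 d2).
  split; [apply HP | apply HQ]; lra.
Qed.

Lemma near2_impl x y (P Q : R -> R -> Prop) :
  (forall a b, P a b -> Q a b) -> near2 x y P -> near2 x y Q.
Proof. intros HPQ [d [Hd HP]]. exists d. split; auto. Qed.

Definition cont2 (f : R -> R -> R) (x y : R) : Prop :=
  continuous (fun q : R * R => f (fst q) (snd q)) (x, y).

Lemma cont2_near f x y :
  cont2 f x y <->
  forall eps, 0 < eps -> near2 x y (fun a b => Rabs (f a b - f x y) < eps).
Proof.
  unfold cont2, continuous. rewrite filterlim_locally. split.
  - intros H eps He. destruct (H (mkposreal _ He)) as [d Hd].
    exists d. split; [apply cond_pos |]. intros a b Ha Hb. apply (Hd (a, b)). now split.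
  - intros H eps. destruct (H eps (cond_pos eps)) as [d [Hd Hbox]].
    exists (mkposreal _ Hd). intros [a b] [Ha Hb]. now apply Hbox.
Qed.

Lemma cont2_near_ext f g x y :
  near2 x y (fun a b => f a b = g a b) -> cont2 g x y -> cont2 f x y.
Proof.
  intros Hfg Hg. rewrite cont2_near in Hg |- *. intros eps He.
  rewrite (near2_center _ _ _ Hfg).
  apply (near2_impl _ _ (fun a b => f a b = g a b /\ Rabs (g a b - g x y) < eps)).
  - intros a b [-> H]. exact H.
  - apply near2_and; auto.
Qed.

Lemma cont2_const c x y : cont2 (fun _ _ => c) x y.
Proof. apply continuous_const. Qed.

Lemma cont2_sumsq x y : cont2 (fun a b => a * a + b * b) x y.
Proof.
  apply (continuous_plus (fun q : R * R => fst q * fst q) (fun q : R * R => snd q * snd q)).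
  - apply (continuous_mult (fun q : R * R => fst q) (fun q : R * R => fst q));
      apply continuous_fst.
  - apply (continuous_mult (fun q : R * R => snd q) (fun q : R * R => snd q));
      apply continuous_snd.
Qed.

Lemma sumsq_near_gt c x y :
  c < x * x + y * y -> near2 x y (fun a b => c < a * a + b * b).
Proof.
  intros H. apply (near2_impl _ _ (fun a b =>
    Rabs (a * a + b * b - (x * x + y * y)) < x * x + y * y - c)).
  - intros a b Hab. apply Rabs_def2 in Hab. lra.
  - apply (proj1 (cont2_near _ x y) (cont2_sumsq x y)). lra.
Qed.

Lemma sumsq_near_lt c x y :
  x * x + y * y < c -> near2 x y (fun a b => a * a + b * b < c).
Proof.
  intros H. apply (near2_impl _ _ (fun a b =>
    Rabs (a * a + b * b - (x * x + y * y)) < c - (x * x + y * y))).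
  - intros a b Hab. apply Rabs_def2 in Hab. lra.
  - apply (proj1 (cont2_near _ x y) (cont2_sumsq x y)). lra.
Qed.

Lemma continuity_pt_of_eps (G : R -> R) x0 :
  (forall eps, 0 < eps -> exists d, 0 < d /\
     forall x, Rabs (x - x0) < d -> Rabs (G x - G x0) < eps) ->
  continuity_pt G x0.
Proof.
  intros H eps He. destruct (H eps He) as [d [Hd HG]].
  exists d. split; auto. intros x [_ Hx]. now apply HG.
Qed.

Lemma cont2_unif_rect (f : R -> R -> R) a b c d :
  (forall x y, cont2 f x y) -> forall eps, 0 < eps ->
  exists dd, 0 < dd /\ forall x y x' y', a <= x <= b -> c <= y <= d ->
    Rabs (x' - x) < dd -> Rabs (y' - y) < dd -> Rabs (f x' y' - f x y) < eps.
Proof.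
  intros Hc eps He.
  assert (Hmod : forall t u, {dl : R | 0 < dl /\ forall a b, Rabs (a - t) < dl ->
      Rabs (b - u) < dl -> Rabs (f a b - f t u) < eps / 2}).
  { intros t u. apply constructive_indefinite_description.
    apply (proj1 (cont2_near f t u) (Hc t u)). lra. }
  assert (Hpos : forall t u, 0 < proj1_sig (Hmod t u) / 2).
  { intros t u. destruct (proj2_sig (Hmod t u)) as [Hh _]. lra. }
  destruct (compactness_value_2d a b c d (fun t u => mkposreal _ (Hpos t u)))
    as [dd Hdd].
  exists dd. split; [apply cond_pos |].
  intros x y x' y' Hx Hy Hx' Hy'.
  destruct (Rlt_dec (Rabs (f x' y' - f x y)) eps) as [Hl | Hl]; auto. exfalso.
  apply (Hdd x y Hx Hy). intros [t [u [_ [_ [Hxt [Hyu Hd]]]]]]. simpl in Hxt, Hyu, Hd.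
  destruct (proj2_sig (Hmod t u)) as [Hdl Hp]. set (dl := proj1_sig (Hmod t u)) in *.
  assert (A1 : Rabs (f x y - f t u) < eps / 2) by (apply Hp; lra).
  assert (A2 : Rabs (f x' y' - f t u) < eps / 2).
  { apply Hp.
    - replace (x' - t) with ((x' - x) + (x - t)) by ring.
      eapply Rle_lt_trans; [apply Rabs_triang | lra].
    - replace (y' - u) with ((y' - y) + (y - u)) by ring.
      eapply Rle_lt_trans; [apply Rabs_triang | lra]. }
  apply Hl. apply Rabs_def2 in A1. apply Rabs_def2 in A2. apply Rabs_def1; lra.
Qed.

Lemma partial_max_cont (f : R -> R -> R) (ys : R -> R) c d :
  (forall x y, cont2 f x y) ->
  (forall x, c <= ys x <= d /\ forall y, c <= y <= d -> f x y <= f x (ys x)) ->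
  forall x0, continuity_pt (fun x => f x (ys x)) x0.
Proof.
  intros Hc Hys x0. apply continuity_pt_of_eps. intros eps He.
  destruct (cont2_unif_rect f (x0 - 1) (x0 + 1) c d Hc eps He) as [dd [Hdd Hu]].
  exists (Rmin dd 1). split; [apply Rmin_pos; lra |].
  intros x Hx. pose proof (Rmin_l dd 1). pose proof (Rmin_r dd 1).
  assert (Hx1 : x0 - 1 <= x <= x0 + 1) by (apply Rabs_def2 in Hx; lra).
  destruct (Hys x) as [Hyx Hmx]. destruct (Hys x0) as [Hyx0 Hmx0].
  assert (B1 : Rabs (f x (ys x0) - f x0 (ys x0)) < eps).
  { apply Hu; try lra. rewrite Rminus_diag, Rabs_R0; lra. }
  assert (B2 : Rabs (f x0 (ys x) - f x (ys x)) < eps).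
  { apply Hu; try lra; [rewrite Rabs_minus_sym; lra | rewrite Rminus_diag, Rabs_R0; lra]. }
  specialize (Hmx (ys x0) Hyx0). specialize (Hmx0 (ys x) Hyx).
  apply Rabs_def2 in B1. apply Rabs_def2 in B2. apply Rabs_def1; lra.
Qed.

Lemma cont2_max_rect (f : R -> R -> R) a b c d :
  a <= b -> c <= d -> (forall x y, cont2 f x y) ->
  exists x0 y0, a <= x0 <= b /\ c <= y0 <= d /\
    forall x y, a <= x <= b -> c <= y <= d -> f x y <= f x0 y0.
Proof.
  intros Hab Hcd Hc.
  assert (Hslice : forall x, exists y, c <= y <= d /\
            forall y', c <= y' <= d -> f x y' <= f x y).
  { intros x. destruct (continuity_ab_maj (fun y => f x y) c d Hcd) as [M HM].
    - intros y _. apply continuity_pt_of_eps. intros eps He.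
      destruct (proj1 (cont2_near f x y) (Hc x y) eps He) as [dl [Hdl Hp]].
      exists dl. split; auto. intros y' Hy'. apply Hp; auto.
      rewrite Rminus_diag, Rabs_R0. lra.
    - exists M. tauto. }
  destruct (choice _ Hslice) as [ys Hys].
  destruct (continuity_ab_maj (fun x => f x (ys x)) a b Hab) as [M [HM1 HM2]].
  { intros x _. now apply (partial_max_cont f ys c d). }
  exists M, (ys M). destruct (Hys M) as [H1 _]. repeat split; try tauto.
  intros x y Hx Hy. destruct (Hys x) as [_ H3].
  specialize (H3 y Hy). specialize (HM1 x Hx). lra.
Qed.

Lemma second_derivative_test (h h' : R -> R) h2 t0 d : 0 < d ->
  (forall t, Rabs (t - t0) < d -> derivable_pt_lim h t (h' t)) ->
  derivable_pt_lim h' t0 h2 ->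
  (forall t, Rabs (t - t0) < d -> h t <= h t0) -> h' t0 = 0 /\ h2 <= 0.
Proof.
  intros Hd Hder Hder2 Hmax.
  assert (Hcenter : Rabs (t0 - t0) < d) by (rewrite Rminus_diag, Rabs_R0; lra).
  assert (Hcrit : h' t0 = 0).
  { pose proof (deriv_maximum h (t0 - d) (t0 + d) t0 (exist _ _ (Hder t0 Hcenter))
                  ltac:(lra) ltac:(lra)) as Hm.
    rewrite <- Hm.
    - symmetry. apply derive_pt_eq_0. now apply Hder.
    - intros t H1 H2. apply Hmax. apply Rabs_def1; lra. }
  split; auto.
  destruct (Rle_dec h2 0) as [Hle | Hpos]; auto. exfalso.
  (* If h'' (t0) > 0, then h' > 0 just right of t0, and h would increase there. *)
  destruct (Hder2 (h2 / 2) ltac:(lra)) as [del Hdel].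
  assert (Hincr : forall s, 0 < s -> s < del -> 0 < h' (t0 + s)).
  { intros s H1 H2. specialize (Hdel s ltac:(lra) ltac:(rewrite Rabs_right; lra)).
    rewrite Hcrit in Hdel. apply Rabs_def2 in Hdel.
    assert (0 < (h' (t0 + s) - 0) / s) by lra.
    replace (h' (t0 + s)) with (((h' (t0 + s) - 0) / s) * s) by (field; lra).
    apply Rmult_lt_0_compat; lra. }
  pose proof (cond_pos del). set (s := Rmin del d / 2).
  assert (Hs : 0 < s < Rmin del d) by (unfold s; pose proof (Rmin_pos del d); lra).
  pose proof (Rmin_l del d). pose proof (Rmin_r del d).
  destruct (MVT_cor2 h h' t0 (t0 + s) ltac:(lra)) as [c [Hc1 Hc2]].
  { intros c Hc. apply Hder. apply Rabs_def1; lra. }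
  specialize (Hincr (c - t0) ltac:(lra) ltac:(lra)).
  replace (t0 + (c - t0)) with c in Hincr by ring.
  specialize (Hmax (t0 + s) ltac:(rewrite Rabs_right; lra)).
  assert (0 < h' c * (t0 + s - t0)) by (apply Rmult_lt_0_compat; lra). lra.
Qed.

Lemma nrm_sq x y : nrm x y * nrm x y = x * x + y * y.
Proof. unfold nrm. apply sqrt_sqrt. nra. Qed.

Lemma nrm_pos x y : 0 < x * x + y * y -> 0 < nrm x y.
Proof. intros H. now apply sqrt_lt_R0. Qed.

Lemma nrm_ge Rb x y : 0 < Rb -> inOmega Rb x y -> Rb <= nrm x y.
Proof.
  intros H1 H2. unfold nrm, inOmega in *. rewrite <- (sqrt_square Rb) by lra.
  apply sqrt_le_1_alt. lra.
Qed.

Lemma omega_sumsq_pos Rb x y : 0 < Rb -> inOmega Rb x y -> 0 < x * x + y * y.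
Proof. unfold inOmega. nra. Qed.

Lemma nrm_ge_coords u w : Rabs u <= nrm u w /\ Rabs w <= nrm u w.
Proof.
  unfold nrm. rewrite <- !sqrt_Rsqr_abs. unfold Rsqr. split; apply sqrt_le_1_alt; nra.
Qed.

Lemma nrm_lt_box u w e : Rabs u < e -> Rabs w < e -> nrm u w < 2 * e.
Proof.
  intros H1 H2. unfold nrm. pose proof (Rabs_pos u). pose proof (Rabs_pos w).
  rewrite <- (sqrt_square (2 * e)) by lra. apply sqrt_lt_1_alt. split; [nra |].
  assert (u * u = Rabs u * Rabs u) by (rewrite <- Rabs_mult, Rabs_right; nra).
  assert (w * w = Rabs w * Rabs w) by (rewrite <- Rabs_mult, Rabs_right; nra).
  nra.
Qed.

Lemma cont2_nrm x y : 0 < x * x + y * y -> cont2 nrm x y.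
Proof.
  intros H. unfold cont2, nrm.
  apply (continuous_comp (fun q : R * R => fst q * fst q + snd q * snd q) sqrt);
    [apply cont2_sumsq |].
  apply continuity_pt_filterlim, continuity_pt_sqrt. simpl. lra.
Qed.

Lemma cont_on_near n Rb x y : cont_on n (inOmega Rb) -> inOmega Rb x y ->
  forall eps, 0 < eps ->
  near2 x y (fun a b => inOmega Rb a b -> Rabs (n a b - n x y) < eps).
Proof.
  intros Hc Hxy eps He. destruct (Hc x y Hxy eps He) as [dl [Hdl Hp]].
  exists (dl / 2). split; [lra |]. intros a b Ha Hb Hab. apply Hp; auto.
  unfold dist2. pose proof (nrm_lt_box (a - x) (b - y) (dl / 2) Ha Hb). lra.
Qed.

Lemma cont_on_interior n Rb x y : cont_on n (inOmega Rb) -> inInt Rb x y -> cont2 n x y.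
Proof.
  intros Hc Hxy. apply cont2_near. intros eps He.
  apply (near2_impl _ _ (fun a b => Rb * Rb < a * a + b * b /\
           (inOmega Rb a b -> Rabs (n a b - n x y) < eps))).
  - intros a b [Hin H]. apply H. unfold inOmega. lra.
  - apply near2_and; [now apply sumsq_near_gt |].
    apply cont_on_near; auto. unfold inOmega, inInt in *. lra.
Qed.

Lemma cont_on_minus (f g : R -> R -> R) (U : R -> R -> Prop) :
  cont_on f U -> (forall x y, U x y -> cont2 g x y) ->
  cont_on (fun x y => f x y - g x y) U.
Proof.
  intros Hf Hg x y Hxy eps He.
  destruct (Hf x y Hxy (eps / 2) ltac:(lra)) as [d1 [Hd1 H1]].
  destruct (proj1 (cont2_near g x y) (Hg x y Hxy) (eps / 2) ltac:(lra)) as [d2 [Hd2 H2]].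
  exists (Rmin d1 d2). split; [apply Rmin_pos; auto |].
  intros a b Hab Hd. pose proof (Rmin_l d1 d2). pose proof (Rmin_r d1 d2).
  unfold dist2 in Hd. destruct (nrm_ge_coords (a - x) (b - y)) as [Ca Cb].
  assert (E1 := H1 a b Hab ltac:(unfold dist2; lra)).
  assert (E2 := H2 a b ltac:(lra) ltac:(lra)).
  apply Rabs_def2 in E1. apply Rabs_def2 in E2. apply Rabs_def1; lra.
Qed.

Lemma cont_on_opp (f : R -> R -> R) U : cont_on f U -> cont_on (fun x y => - f x y) U.
Proof.
  intros H x y Hxy eps He. destruct (H x y Hxy eps He) as [d [Hd Hp]].
  exists d. split; auto. intros a b Hab Hdd.
  replace (- f a b - - f x y) with (- (f a b - f x y)) by ring.
  rewrite Rabs_Ropp. auto.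
Qed.

Definition upper (Rb x y : R) : Prop := 0 < y /\ Rb * Rb < x * x + y * y.

Lemma upper_near Rb x y : upper Rb x y -> near2 x y (upper Rb).
Proof.
  intros [Hy Hs]. apply (near2_and x y (fun a b => 0 < b)); [| now apply sumsq_near_gt].
  exists y. split; auto. intros a b _ Hb. apply Rabs_def2 in Hb. lra.
Qed.

Definition pos_ratio (Rb : R) (n : R -> R -> R) (x y : R) : R :=
  if Rlt_dec 0 y then
    if Rlt_dec (Rb * Rb) (x * x + y * y) then Rmax (n x y / y) 0 else 0
  else 0.

Lemma pos_ratio_in Rb n x y : upper Rb x y -> pos_ratio Rb n x y = Rmax (n x y / y) 0.
Proof.
  intros [H1 H2]. unfold pos_ratio. destruct Rlt_dec; [| lra]. destruct Rlt_dec; [| lra]. auto.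
Qed.

Lemma pos_ratio_out Rb n x y : ~ upper Rb x y -> pos_ratio Rb n x y = 0.
Proof.
  intros H. unfold pos_ratio, upper in *. destruct Rlt_dec; auto. destruct Rlt_dec; auto. tauto.
Qed.

Lemma pos_ratio_neg Rb n x y : n x y < 0 -> pos_ratio Rb n x y = 0.
Proof.
  intros Hn. destruct (Classical_Prop.classic (upper Rb x y)) as [[Hy Hs] | H].
  - rewrite pos_ratio_in by (split; auto). apply Rmax_right.
    unfold Rdiv. assert (0 < / y) by (apply Rinv_0_lt_compat; lra). nra.
  - now apply pos_ratio_out.
Qed.

Lemma cont2_pos_part_ratio n x y :
  cont2 n x y -> y <> 0 -> cont2 (fun a b => Rmax (n a b / b) 0) x y.
Proof.
  intros Hn Hy. unfold cont2.
  assert (Hmax : forall u, Rmax u 0 = (u + Rabs u) / 2).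
  { intros u. unfold Rmax, Rabs. destruct Rle_dec; destruct Rcase_abs; lra. }
  apply (continuous_ext (fun q : R * R =>
     (n (fst q) (snd q) * / snd q + Rabs (n (fst q) (snd q) * / snd q)) * / 2)).
  { intros q. now rewrite Hmax. }
  assert (Hq : continuous (fun q : R * R => n (fst q) (snd q) * / snd q) (x, y)).
  { apply (continuous_mult (fun q : R * R => n (fst q) (snd q)) (fun q : R * R => / snd q));
      [apply Hn |].
    apply (continuous_comp (fun q : R * R => snd q) Rinv); [apply continuous_snd |].
    apply continuity_pt_filterlim, continuity_pt_inv; [apply continuity_pt_id | auto]. }
  apply (continuous_mult _ (fun _ : R * R => / 2)); [| apply continuous_const].
  apply (continuous_plus _ (fun q : R * R => Rabs (n (fst q) (snd q) * / snd q))); [apply Hq |].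
  apply (continuous_comp _ Rabs); [apply Hq | apply continuous_Rabs].
Qed.

Section MaxPrinciple.
Variables (Rb : R) (n nx ny nxx nyy : R -> R -> R).
Hypothesis n_cont : cont_on n (inOmega Rb).
Hypothesis n_bdry : forall x y, inOmega Rb x y -> (y = 0 \/ onBdry Rb x y) -> n x y < 0.

Lemma pos_ratio_zero_near_neg x y :
  inOmega Rb x y -> n x y < 0 -> near2 x y (fun a b => pos_ratio Rb n a b = 0).
Proof.
  intros Hxy Hn.
  apply (near2_impl _ _ (fun a b => inOmega Rb a b -> Rabs (n a b - n x y) < - n x y)).
  - intros a b Hab. destruct (Classical_Prop.classic (upper Rb a b)) as [Hu | Hu].
    + apply pos_ratio_neg. assert (Habs : Rabs (n a b - n x y) < - n x y).
      { apply Hab. unfold upper, inOmega in *. lra. }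
      apply Rabs_def2 in Habs. lra.
    + now apply pos_ratio_out.
  - apply cont_on_near; auto. lra.
Qed.

Lemma pos_ratio_zero_near_out x y :
  y < 0 \/ x * x + y * y < Rb * Rb -> near2 x y (fun a b => pos_ratio Rb n a b = 0).
Proof.
  intros [Hy | Hs].
  - exists (- y). split; [lra |]. intros a b _ Hb. apply pos_ratio_out.
    apply Rabs_def2 in Hb. unfold upper. lra.
  - apply (near2_impl _ _ (fun a b => a * a + b * b < Rb * Rb)); [| now apply sumsq_near_lt].
    intros a b H. apply pos_ratio_out. unfold upper. lra.
Qed.

Lemma pos_ratio_cont x y : cont2 (pos_ratio Rb n) x y.
Proof.
  destruct (Classical_Prop.classic (upper Rb x y)) as [Hu | Hu].
  - apply (cont2_near_ext _ (fun a b => Rmax (n a b / b) 0)).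
    + apply (near2_impl _ _ _ _ (pos_ratio_in Rb n)). now apply upper_near.
    + destruct Hu as [Hy Hs]. apply cont2_pos_part_ratio; [| lra].
      apply (cont_on_interior n Rb); auto.
  - apply (cont2_near_ext _ (fun _ _ => 0)); [| apply cont2_const].
    destruct (Rlt_dec y 0) as [Hy | Hy];
      [| destruct (Rlt_dec (x * x + y * y) (Rb * Rb)) as [Hs | Hs]].
    + apply pos_ratio_zero_near_out. auto.
    + apply pos_ratio_zero_near_out. auto.
    + apply pos_ratio_zero_near_neg; [unfold inOmega; lra |]. apply n_bdry.
      * unfold inOmega. lra.
      * unfold upper, onBdry in *. lra.
Qed.

Hypothesis n_far : exists R1, 0 < R1 /\
  forall x y, inOmega Rb x y -> R1 * R1 <= x * x + y * y -> n x y <= 0.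

Lemma pos_ratio_touching x1 y1 : upper Rb x1 y1 -> 0 < n x1 y1 ->
  exists x0 y0 phi, upper Rb x0 y0 /\ n x0 y0 = phi * y0 /\
    forall a b, upper Rb a b -> n a b <= phi * b.
Proof.
  intros Hu1 Hn1. destruct n_far as [R1 [HR1 Hfar]].
  set (R2 := R1 + Rabs x1 + Rabs y1 + 1).
  pose proof (Rabs_pos x1). pose proof (Rabs_pos y1).
  destruct (cont2_max_rect (pos_ratio Rb n) (- R2) R2 0 R2
              ltac:(unfold R2; lra) ltac:(unfold R2; lra) pos_ratio_cont)
    as [x0 [y0 [Hx0 [Hy0 Hmax]]]].
  assert (Hpos1 : 0 < pos_ratio Rb n x1 y1).
  { rewrite pos_ratio_in by auto. eapply Rlt_le_trans; [| apply Rmax_l].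
    apply Rdiv_lt_0_compat; [auto | apply Hu1]. }
  assert (Hpos0 : 0 < pos_ratio Rb n x0 y0).
  { eapply Rlt_le_trans; [apply Hpos1 | apply Hmax].
    - pose proof (Rle_abs x1). pose proof (Rle_abs (- x1)) as Hx1.
      rewrite Rabs_Ropp in Hx1. unfold R2. lra.
    - pose proof (Rle_abs y1). destruct Hu1. unfold R2. lra. }
  assert (Hu0 : upper Rb x0 y0).
  { apply Classical_Prop.NNPP. intros Hout. rewrite pos_ratio_out in Hpos0; auto. lra. }
  assert (Hphi : pos_ratio Rb n x0 y0 = n x0 y0 / y0).
  { rewrite pos_ratio_in in Hpos0 |- * by auto. unfold Rmax in *. destruct Rle_dec; lra. }
  set (phi := n x0 y0 / y0) in *.
  exists x0, y0, phi. split; [auto |]. split; [unfold phi; destruct Hu0; field; lra |].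
  intros a b [Hb Hs]. destruct (Rle_dec (n a b) 0) as [Hle | Hgt]; [nra |].
  (* n a b > 0 forces (a, b) into the rectangle, where the ratio is at most phi *)
  assert (Hsm : a * a + b * b < R1 * R1).
  { apply Rnot_le_lt. intros Hbig. apply Hgt, Hfar; [unfold inOmega |]; lra. }
  assert (Hab : n a b / b <= phi).
  { rewrite <- Hphi. eapply Rle_trans; [apply Rmax_l |].
    rewrite <- (pos_ratio_in Rb n a b) by (split; auto). apply Hmax; unfold R2; split; nra. }
  apply (Rmult_le_compat_r b) in Hab; [| lra].
  unfold Rdiv in Hab. rewrite Rmult_assoc, Rinv_l in Hab; lra.
Qed.

Hypothesis n_dx : is_dx n nx (inInt Rb).
Hypothesis nx_dx : is_dx nx nxx (inInt Rb).
Hypothesis n_dy : is_dy n ny (inInt Rb).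
Hypothesis ny_dy : is_dy ny nyy (inInt Rb).

(* Since L y = 0: if n <= phi y on D with equality at (x0, y0), then L n (x0, y0) <= 0,
   by the second-derivative test for t |-> n t y0 and s |-> n x0 s - phi s. *)
Lemma touching_from_below x0 y0 phi :
  upper Rb x0 y0 -> n x0 y0 = phi * y0 -> (forall a b, upper Rb a b -> n a b <= phi * b) ->
  nxx x0 y0 + nyy x0 y0 - (x0 * nx x0 y0 + y0 * ny x0 y0) + n x0 y0 <= 0.
Proof.
  intros Hu0 Htouch Hbelow.
  destruct (upper_near Rb x0 y0 Hu0) as [d [Hd Hbox]].
  assert (Hint : forall a b, upper Rb a b -> inInt Rb a b) by (intros a b [_ H]; exact H).
  assert (Hcx : Rabs (x0 - x0) < d) by (rewrite Rminus_diag, Rabs_R0; lra).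
  assert (Hcy : Rabs (y0 - y0) < d) by (rewrite Rminus_diag, Rabs_R0; lra).
  destruct (second_derivative_test (fun t => n t y0) (fun t => nx t y0) (nxx x0 y0) x0 d Hd)
    as [Hx1 Hx2].
  - intros t Ht. apply n_dx, Hint, Hbox; auto.
  - apply nx_dx, Hint, Hu0.
  - intros t Ht. rewrite Htouch. apply Hbelow, Hbox; auto.
  - destruct (second_derivative_test (fun s => n x0 s - phi * s) (fun s => ny x0 s - phi)
                (nyy x0 y0 - 0) y0 d Hd) as [Hy1 Hy2].
    + intros s Hs. apply derivable_pt_lim_minus; [apply n_dy, Hint, Hbox; auto |].
      replace phi with (phi * 1) at 2 by ring.
      apply derivable_pt_lim_scal, derivable_pt_lim_id.
    + apply derivable_pt_lim_minus; [apply ny_dy, Hint, Hu0 | apply derivable_pt_lim_const].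
    + intros s Hs. rewrite Htouch. pose proof (Hbelow x0 s (Hbox x0 s Hcx Hs)). lra.
    + simpl in Hx1, Hy1. rewrite Hx1, Htouch. replace (ny x0 y0) with phi by lra. lra.
Qed.

Hypothesis n_subsolution : forall x y, upper Rb x y ->
  0 < nxx x y + nyy x y - (x * nx x y + y * ny x y) + n x y.

Lemma half_domain_max_principle x y : inOmega Rb x y -> 0 < y -> n x y <= 0.
Proof.
  intros Hxy Hy. apply Rnot_lt_le. intros Hn.
  assert (Hu : upper Rb x y).
  { split; auto. destruct Hxy as [Hs | Hs]; auto.
    assert (n x y < 0) by (apply n_bdry; [unfold inOmega | right; unfold onBdry]; lra). lra. }
  destruct (pos_ratio_touching x y Hu Hn) as [x0 [y0 [phi [Hu0 [Htouch Hbelow]]]]].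
  pose proof (touching_from_below x0 y0 phi Hu0 Htouch Hbelow).
  pose proof (n_subsolution x0 y0 Hu0). lra.
Qed.
End MaxPrinciple.

(* Its kappa-part vanishes on the circle r = Rb, its eps-part makes
   it dominate functions of linear growth, and L g is explicit (lemma [barrier_L]). *)
Section Barrier.
Variables (kp ep Rb : R).

Definition bar (x y : R) : R := kp * (nrm x y - Rb * Rb / nrm x y) + ep * (x * x + y * y).
Definition bar_x (x y : R) : R := kp * (x / nrm x y + Rb * Rb * x / nrm x y ^ 3) + 2 * ep * x.
Definition bar_y (x y : R) : R := kp * (y / nrm x y + Rb * Rb * y / nrm x y ^ 3) + 2 * ep * y.
Definition bar_xx (x y : R) : R :=
  kp * (1 / nrm x y - x * x / nrm x y ^ 3 + Rb * Rb / nrm x y ^ 3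
        - 3 * Rb * Rb * x * x / nrm x y ^ 5) + 2 * ep.
Definition bar_yy (x y : R) : R :=
  kp * (1 / nrm x y - y * y / nrm x y ^ 3 + Rb * Rb / nrm x y ^ 3
        - 3 * Rb * Rb * y * y / nrm x y ^ 5) + 2 * ep.

Ltac barrier_derive x y :=
  apply is_derive_Reals; unfold bar, bar_x, bar_y, bar_xx, bar_yy, nrm;
  assert (0 < sqrt (x * x + y * y)) by (apply sqrt_lt_R0; lra);
  auto_derive;
  [ repeat split; try apply Rgt_not_eq; try lra;
    unfold Rgt; repeat apply Rmult_lt_0_compat; lra
  | field; lra ].

Lemma bar_dx x y : 0 < x * x + y * y -> derivable_pt_lim (fun t => bar t y) x (bar_x x y).
Proof. intros H. barrier_derive x y. Qed.
Lemma bar_dy x y : 0 < x * x + y * y -> derivable_pt_lim (fun t => bar x t) y (bar_y x y).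
Proof. intros H. barrier_derive x y. Qed.
Lemma bar_dxx x y : 0 < x * x + y * y -> derivable_pt_lim (fun t => bar_x t y) x (bar_xx x y).
Proof. intros H. barrier_derive x y. Qed.
Lemma bar_dyy x y : 0 < x * x + y * y -> derivable_pt_lim (fun t => bar_y x t) y (bar_yy x y).
Proof. intros H. barrier_derive x y. Qed.

Lemma barrier_L x y : 0 < x * x + y * y ->
  bar_xx x y + bar_yy x y - (x * bar_x x y + y * bar_y x y) + bar x y =
  kp * (1 - 2 * Rb * Rb) / nrm x y - kp * Rb * Rb / nrm x y ^ 3
  + ep * (4 - nrm x y * nrm x y).
Proof.
  intros H. pose proof (nrm_pos x y H) as Hr. pose proof (nrm_sq x y) as Hsq.
  unfold bar, bar_x, bar_y, bar_xx, bar_yy. set (r := nrm x y) in *.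
  (* collect the terms in |xi|^2 = x^2 + y^2, then replace it by r^2 *)
  transitivity (kp * (2 / r - (x * x + y * y) / r ^ 3 + 2 * Rb * Rb / r ^ 3
                      - 3 * Rb * Rb * (x * x + y * y) / r ^ 5) + 4 * ep
     - (kp * ((x * x + y * y) / r + Rb * Rb * (x * x + y * y) / r ^ 3)
        + 2 * ep * (x * x + y * y))
     + (kp * (r - Rb * Rb / r) + ep * (x * x + y * y))).
  { field. lra. }
  rewrite <- Hsq. field. lra.
Qed.

Lemma cont2_bar x y : 0 < x * x + y * y -> cont2 bar x y.
Proof.
  intros H. unfold cont2, bar.
  assert (Hn := cont2_nrm x y H). unfold cont2 in Hn.
  apply (continuous_plus
           (fun q : R * R => kp * (nrm (fst q) (snd q) - Rb * Rb / nrm (fst q) (snd q)))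
           (fun q : R * R => ep * (fst q * fst q + snd q * snd q))).
  - apply (continuous_mult (fun _ : R * R => kp)); [apply continuous_const |].
    apply (continuous_minus (fun q : R * R => nrm (fst q) (snd q))); [exact Hn |].
    apply (continuous_mult (fun _ : R * R => Rb * Rb)); [apply continuous_const |].
    apply (continuous_comp _ Rinv); [exact Hn |].
    apply continuity_pt_filterlim, continuity_pt_inv; [apply continuity_pt_id |].
    apply Rgt_not_eq, nrm_pos. simpl. lra.
  - apply (continuous_mult (fun _ : R * R => ep)); [apply continuous_const | apply cont2_sumsq].
Qed.

Lemma bar_ge_quadratic x y :
  0 < Rb -> 0 <= kp -> inOmega Rb x y -> ep * (x * x + y * y) <= bar x y.
Proof.
  intros H1 H2 H3. unfold bar. pose proof (nrm_ge Rb x y H1 H3) as Hr.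
  assert (0 <= nrm x y - Rb * Rb / nrm x y).
  { replace (nrm x y - Rb * Rb / nrm x y) with ((nrm x y * nrm x y - Rb * Rb) / nrm x y)
      by (field; lra).
    apply Rmult_le_pos; [nra | left; apply Rinv_0_lt_compat; lra]. }
  nra.
Qed.

Lemma bar_le_profile x y : 0 <= kp -> 0 < x * x + y * y ->
  bar x y <= kp * nrm x y + ep * (nrm x y * nrm x y).
Proof.
  intros Hkp H. unfold bar. rewrite nrm_sq. pose proof (nrm_pos x y H).
  assert (0 <= Rb * Rb / nrm x y)
    by (apply Rmult_le_pos; [nra | left; now apply Rinv_0_lt_compat]).
  nra.
Qed.
End Barrier.

(* For kappa = K / A + delta and eps = delta A / 8, where A = 2 Rb^2 - 1 > 0, the barrier
   satisfies L g < - K / r: the excess is delta A (r^3 - 4 r + 8) / (8 r) + kappa Rb^2 / r^3. *)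
Lemma barrier_margin Rb K dl r : 1 < 2 * Rb * Rb -> 0 <= K -> 0 < dl -> 0 < r ->
  (K / (2 * Rb * Rb - 1) + dl) * (1 - 2 * Rb * Rb) / r
  - (K / (2 * Rb * Rb - 1) + dl) * Rb * Rb / r ^ 3
  + dl * (2 * Rb * Rb - 1) / 8 * (4 - r * r) < - K / r.
Proof.
  intros HA HK Hdl Hr. set (A := 2 * Rb * Rb - 1).
  assert (HA' : 0 < A) by (unfold A; lra).
  set (kp := K / A + dl).
  assert (Hkp : 0 <= kp) by (unfold kp; apply Rplus_le_le_0_compat;
    [apply Rmult_le_pos; [lra | left; now apply Rinv_0_lt_compat] | lra]).
  assert (Hcubic : 0 < r * r * r - 4 * r + 8).
  { assert (0 < r * r * r) by (repeat apply Rmult_lt_0_compat; lra).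
    destruct (Rle_dec r 2); [lra | nra]. }
  assert (Hgap : 0 < dl * A * (r * r * r - 4 * r + 8) / (8 * r)).
  { apply Rdiv_lt_0_compat; [apply Rmult_lt_0_compat; nra | lra]. }
  assert (Hcorr : 0 <= kp * Rb * Rb / r ^ 3).
  { apply Rmult_le_pos; [nra | left; apply Rinv_0_lt_compat, pow_lt; lra]. }
  assert (Hid : - K / r - (kp * (1 - 2 * Rb * Rb) / r - kp * Rb * Rb / r ^ 3
                 + dl * A / 8 * (4 - r * r))
               = dl * A * (r * r * r - 4 * r + 8) / (8 * r) + kp * Rb * Rb / r ^ 3).
  { unfold kp, A. field. lra. }
  lra.
Qed.

Lemma linear_below_quadratic C ep : 0 < ep ->
  exists R1, 0 < R1 /\ forall r, R1 <= r -> C * r <= ep * (r * r).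
Proof.
  intros Hep. pose proof (Rabs_pos C). pose proof (Rle_abs C).
  assert (Hq : 0 <= Rabs C / ep)
    by (apply Rmult_le_pos; [lra | left; now apply Rinv_0_lt_compat]).
  exists (Rabs C / ep + 1). split; [lra |]. intros r Hr.
  assert (Rabs C <= ep * r)
    by (replace (Rabs C) with (ep * (Rabs C / ep)) by (field; lra); nra).
  nra.
Qed.

Lemma le_of_le_plus_mult a b c : 0 <= c -> (forall d, 0 < d -> a <= b + d * c) -> a <= b.
Proof.
  intros Hc H. apply Rle_plus_epsilon. intros eps He.
  specialize (H (eps / (c + 1)) ltac:(apply Rdiv_lt_0_compat; lra)).
  assert (eps / (c + 1) * c <= eps).
  { apply (Rmult_le_reg_r (c + 1)); [lra |].
    replace (eps / (c + 1) * c * (c + 1)) with (eps * c) by (field; lra). nra. }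
  lra.
Qed.

Lemma is_dx_opp f g U : is_dx f g U -> is_dx (fun x y => - f x y) (fun x y => - g x y) U.
Proof. intros H x y Hxy. apply (derivable_pt_lim_opp (fun t => f t y)). auto. Qed.
Lemma is_dy_opp f g U : is_dy f g U -> is_dy (fun x y => - f x y) (fun x y => - g x y) U.
Proof. intros H x y Hxy. apply (derivable_pt_lim_opp (fun t => f x t)). auto. Qed.

Section Comparison.
Variables (Rb K C : R) (v vx vy vxx vyy : R -> R -> R).
Hypothesis Rb_pos : 0 < Rb.
Hypothesis Rb_large : 1 < 2 * Rb * Rb.
Hypothesis K_nonneg : 0 <= K.
Hypothesis v_cont : cont_on v (inOmega Rb).
Hypothesis v_axis : forall x, inOmega Rb x 0 -> v x 0 = 0.
Hypothesis v_bdry : forall x y, onBdry Rb x y -> v x y = 0.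
Hypothesis v_growth : forall x y, inOmega Rb x y -> v x y <= C * nrm x y.
Hypothesis v_dx : is_dx v vx (inInt Rb).
Hypothesis vx_dx : is_dx vx vxx (inInt Rb).
Hypothesis v_dy : is_dy v vy (inInt Rb).
Hypothesis vy_dy : is_dy vy vyy (inInt Rb).
Hypothesis v_super : forall x y, upper Rb x y ->
  - K / nrm x y <= vxx x y + vyy x y - (x * vx x y + y * vy x y) + v x y.

Let A := 2 * Rb * Rb - 1.

Lemma below_barrier dl : 0 < dl -> forall x y, inOmega Rb x y -> 0 < y ->
  v x y <= bar (K / A + dl) (dl * A / 8) Rb x y.
Proof.
  intros Hdl x y Hxy Hy. set (kp := K / A + dl). set (ep := dl * A / 8).
  assert (HA : 0 < A) by (unfold A; lra).
  assert (Hkp : 0 <= kp) by (unfold kp; apply Rplus_le_le_0_compat;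
    [apply Rmult_le_pos; [lra | left; now apply Rinv_0_lt_compat] | lra]).
  assert (Hep : 0 < ep) by (unfold ep; nra).
  assert (Hnz : forall a b, inInt Rb a b -> 0 < a * a + b * b) by (unfold inInt; intros; nra).
  enough (v x y - bar kp ep Rb x y <= 0) by lra.
  apply (half_domain_max_principle Rb (fun a b => v a b - bar kp ep Rb a b)
           (fun a b => vx a b - bar_x kp ep Rb a b)
           (fun a b => vy a b - bar_y kp ep Rb a b) (fun a b => vxx a b - bar_xx kp ep Rb a b)
           (fun a b => vyy a b - bar_yy kp ep Rb a b)); auto.
  -
    apply (cont_on_minus v (bar kp ep Rb)); auto.
    intros a b Hab. now apply cont2_bar, (omega_sumsq_pos Rb).
  - (* v - g < 0 on the boundary of D, where v = 0 < eps r^2 <= g *)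
    intros a b Hab Hb. pose proof (bar_ge_quadratic kp ep Rb a b Rb_pos Hkp Hab).
    pose proof (omega_sumsq_pos Rb a b Rb_pos Hab).
    destruct Hb as [-> | Hb]; [rewrite v_axis | rewrite v_bdry]; auto; nra.
  - (* far out, v <= C r <= eps r^2 <= g *)
    destruct (linear_below_quadratic C ep Hep) as [R1 [HR1 Hlin]].
    exists R1. split; auto. intros a b Hab Hfar.
    assert (HR1r : R1 <= nrm a b).
    { unfold nrm. rewrite <- (sqrt_square R1) by lra. now apply sqrt_le_1_alt. }
    pose proof (Hlin _ HR1r). rewrite nrm_sq in *.
    pose proof (v_growth a b Hab). pose proof (bar_ge_quadratic kp ep Rb a b Rb_pos Hkp Hab).
    lra.
  -
    intros a b Hab. apply derivable_pt_lim_minus; auto. apply bar_dx; auto.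
  - intros a b Hab. apply derivable_pt_lim_minus; auto. apply bar_dxx; auto.
  - intros a b Hab. apply derivable_pt_lim_minus; auto. apply bar_dy; auto.
  - intros a b Hab. apply derivable_pt_lim_minus; auto. apply bar_dyy; auto.
  - (* L (v - g) >= - K / r - L g > 0 *)
    intros a b [Hb Hs]. pose proof (Hnz a b Hs) as Hpos.
    pose proof (v_super a b (conj Hb Hs)).
    pose proof (barrier_L kp ep Rb a b Hpos) as HLg.
    pose proof (barrier_margin Rb K dl (nrm a b) Rb_large K_nonneg Hdl (nrm_pos a b Hpos)).
    unfold kp, ep, A in *. lra.
Qed.

(* Letting delta -> 0 in [below_barrier], since g <= kappa r + eps r^2. *)
Lemma half_domain_bound x y : inOmega Rb x y -> 0 < y ->
  v x y <= K / (2 * Rb ^ 2 - 1) * nrm x y.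
Proof.
  intros Hxy Hy. replace (2 * Rb ^ 2 - 1) with A by (unfold A; ring).
  assert (HA : 0 < A) by (unfold A; lra).
  pose proof (omega_sumsq_pos Rb x y Rb_pos Hxy) as Hpos. pose proof (nrm_pos x y Hpos).
  apply (le_of_le_plus_mult _ _ (nrm x y + A / 8 * (nrm x y * nrm x y))); [nra |].
  intros dl Hdl. eapply Rle_trans; [apply (below_barrier dl Hdl); auto |].
  eapply Rle_trans; [apply bar_le_profile; auto |].
  - apply Rplus_le_le_0_compat; [| lra].
    apply Rmult_le_pos; [lra | left; now apply Rinv_0_lt_compat].
  - lra.
Qed.
End Comparison.

Lemma half_domain_abs_bound Rb K C (v vx vy vxx vyy : R -> R -> R) :
  0 < Rb -> 1 < 2 * Rb * Rb -> 0 <= K ->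
  cont_on v (inOmega Rb) ->
  (forall x, inOmega Rb x 0 -> v x 0 = 0) ->
  (forall x y, onBdry Rb x y -> v x y = 0) ->
  (forall x y, inOmega Rb x y -> Rabs (v x y) <= C * nrm x y) ->
  is_dx v vx (inInt Rb) -> is_dx vx vxx (inInt Rb) ->
  is_dy v vy (inInt Rb) -> is_dy vy vyy (inInt Rb) ->
  (forall x y, upper Rb x y ->
     Rabs (vxx x y + vyy x y - (x * vx x y + y * vy x y) + v x y) <= K / nrm x y) ->
  forall x y, inOmega Rb x y -> 0 < y -> Rabs (v x y) <= K / (2 * Rb ^ 2 - 1) * nrm x y.
Proof.
  intros HR HA HK Hc Haxis Hbd Hgrowth Hdx Hdxx Hdy Hdyy HL x y Hxy Hy.
  apply Rabs_le. split.
  - enough (- v x y <= K / (2 * Rb ^ 2 - 1) * nrm x y) by lra.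
    apply (half_domain_bound Rb K C (fun a b => - v a b) (fun a b => - vx a b)
             (fun a b => - vy a b) (fun a b => - vxx a b) (fun a b => - vyy a b));
      auto using cont_on_opp, is_dx_opp, is_dy_opp.
    + intros a Ha. rewrite Haxis; auto. ring.
    + intros a b Hab. rewrite Hbd; auto. ring.
    + intros a b Hab. pose proof (Hgrowth a b Hab). pose proof (Rle_abs (- v a b)).
      rewrite Rabs_Ropp in *. lra.
    + intros a b Hab. pose proof (proj1 (Rabs_le_between _ _) (HL a b Hab)).
      unfold Rdiv in *. lra.
  - apply (half_domain_bound Rb K C v vx vy vxx vyy); auto.
    + intros a b Hab. pose proof (Hgrowth a b Hab). pose proof (Rle_abs (v a b)). lra.
    + intros a b Hab. pose proof (proj1 (Rabs_le_between _ _) (HL a b Hab)).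
      unfold Rdiv in *. lra.
Qed.

Lemma odd_in_y_axis Rb (f : R -> R -> R) :
  (forall x y, inOmega Rb x y -> f x (- y) = - f x y) -> forall x, inOmega Rb x 0 -> f x 0 = 0.
Proof. intros Hodd x Hx. pose proof (Hodd x 0 Hx) as H. rewrite Ropp_0 in H. lra. Qed.

Lemma odd_in_y_bound Rb (f : R -> R -> R) k : 0 <= k ->
  (forall x y, inOmega Rb x y -> f x (- y) = - f x y) ->
  (forall x y, inOmega Rb x y -> 0 < y -> Rabs (f x y) <= k * nrm x y) ->
  forall x y, inOmega Rb x y -> Rabs (f x y) <= k * nrm x y.
Proof.
  intros Hk Hodd Hhalf x y Hxy. destruct (Rtotal_order y 0) as [Hy | [-> | Hy]].
  - assert (Hxy' : inOmega Rb x (- y)) by (unfold inOmega in *; lra).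
    pose proof (Hodd x (- y) Hxy') as Ho. rewrite Ropp_involutive in Ho.
    rewrite Ho, Rabs_Ropp. replace (nrm x y) with (nrm x (- y)) by (unfold nrm; f_equal; ring).
    apply Hhalf; auto. lra.
  - rewrite (odd_in_y_axis Rb f Hodd x Hxy), Rabs_R0.
    apply Rmult_le_pos; [auto | apply sqrt_pos].
  - now apply Hhalf.
Qed.

Lemma linear_growth Rb (g : R -> R -> R) : 0 < Rb -> wbounded Rb (-1) (inOmega Rb) g ->
  exists C, forall x y, inOmega Rb x y -> Rabs (g x y) <= C * nrm x y.
Proof.
  intros HR [C HC]. exists C. intros x y Hxy. specialize (HC x y Hxy).
  pose proof (nrm_ge Rb x y HR Hxy) as Hr.
  replace (-1) with (- (1)) in HC by ring. rewrite Rpower_Ropp, Rpower_1 in HC by lra.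
  replace (Rabs (g x y)) with (Rabs (g x y) * / nrm x y * nrm x y) by (field; lra).
  apply Rmult_le_compat_r; lra.
Qed.

Lemma weighted_sup_bound Rb (E : R -> R -> R) K : 0 < Rb ->
  is_lub (fun s => exists x y, inOmega Rb x y /\ s = Rabs (E x y) * nrm x y) K ->
  0 <= K /\ forall x y, inOmega Rb x y -> Rabs (E x y) <= K / nrm x y.
Proof.
  intros HR [Hub _]. split.
  - apply Rle_trans with (Rabs (E Rb 0) * nrm Rb 0).
    + apply Rmult_le_pos; [apply Rabs_pos | apply sqrt_pos].
    + apply Hub. exists Rb, 0. split; [unfold inOmega; lra | auto].
  - intros x y Hxy. pose proof (nrm_ge Rb x y HR Hxy).
    apply (Rmult_le_reg_r (nrm x y)); [lra |]. unfold Rdiv.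
    rewrite Rmult_assoc, Rinv_l, Rmult_1_r by lra.
    apply Hub. exists x, y. auto.
Qed.

Lemma radius_bounds Rb : 1 / sqrt 2 < Rb -> 0 < Rb /\ 1 < 2 * Rb * Rb.
Proof.
  intros H. assert (Hs : 0 < sqrt 2) by (apply sqrt_lt_R0; lra).
  assert (Hss : sqrt 2 * sqrt 2 = 2) by (apply sqrt_sqrt; lra).
  assert (Hinv : 0 < 1 / sqrt 2) by (apply Rdiv_lt_0_compat; lra).
  assert (1 / sqrt 2 * (1 / sqrt 2) = 1 / 2) by (rewrite <- Hss at 3; field; lra).
  split; nra.
Qed.

Theorem mainTheorem8 (m : nat) (alpha Rb : R)
  (E v vx vy vxx vxy vyx vyy : R -> R -> R) (K : R) :
  (1 <= m)%nat ->
  0 < alpha < 1 ->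
  1 / sqrt 2 < Rb ->
  C0a_star Rb alpha m E ->
  C2a_star Rb alpha m v vx vy vxx vxy vyx vyy ->
  (* Delta v - xi . grad v + v = E in Omega *)
  (forall x y, inInt Rb x y ->
     vxx x y + vyy x y - (x * vx x y + y * vy x y) + v x y = E x y) ->
  (* v = 0 on the boundary of Omega *)
  (forall x y, onBdry Rb x y -> v x y = 0) ->
  (* K = sup_{eta in Omega} |E(eta)| |eta| *)
  is_lub (fun s => exists x y, inOmega Rb x y /\ s = Rabs (E x y) * nrm x y) K ->
  forall x y, inOmega Rb x y ->
    Rabs (v x y) <= K / (2 * Rb ^ 2 - 1) * nrm x y.
Proof.
  intros _ _ HRb _ Hv Heq Hbd Hlub.
  (* only the derivatives, continuity, growth and oddness of v enter the argument *)
  destruct Hv as [Hdx [Hdy [Hdxx [_ [_ [Hdyy [Hc [_ [_ [_ [_ [_ [_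
                 [Hw [_ [_ [_ [_ [_ [_ [_ [_ [_ [_ [Hodd _]]]]]]]]]]]]]]]]]]]]]]]]].
  destruct (radius_bounds Rb HRb) as [HR HA].
  destruct (weighted_sup_bound Rb E K HR Hlub) as [HK HE].
  destruct (linear_growth Rb v HR Hw) as [C HC].
  apply (odd_in_y_bound Rb v); auto.
  - apply Rmult_le_pos; [auto | left; apply Rinv_0_lt_compat; nra].
  - apply (half_domain_abs_bound Rb K C v vx vy vxx vyy); auto.
    + exact (odd_in_y_axis Rb v Hodd).
    + intros x y [Hy Hs]. rewrite Heq by exact Hs. apply HE. unfold inOmega. lra.
Qed.
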